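(* Let $\Lambda$ be a basic finite-dimensional $\tau$-tilting finite algebra over a field $K$, and let $\mathcal{T}\in\mathrm{tors}\,\Lambda$. (1) If there exists a nonzero projective module $P\in\mathcal{T}$, then $\mathcal{T}$ is not in the image of $\mathrm{pop}^{\downarrow}_{\mathrm{tors}\,\Lambda}$. (2) If there exists a nonzero injective module $I\in\mathcal{T}^\perp$, then $\mathcal{T}$ is not in the image of $\mathrm{pop}^{\uparrow}_{\mathrm{tors}\,\Lambda}$.
   Context: $\mathrm{mod}\,\Lambda$: finitely generated right $\Lambda$-modules; $\mathrm{tors}\,\Lambda$: finite lattice of torsion classes (subcategories closed under extensions and quotients) under inclusion. For a finite lattice, $\mathrm{pop}^{\downarrow}(x)=x\wedge\bigwedge\{y:y\lessdot x\}$ and $\mathrm{pop}^{\uparrow}(x)=x\vee\bigvee\{y:x\lessdot y\}$. $\mathcal{T}^\perp=\{M:\mathrm{Hom}_\Lambda(T,M)=0\ \forall T\in\mathcal{T}\}$. *)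

From HB Require Import structures.
From mathcomp Require Import all_boot all_order all_algebra falgebra.
Set Implicit Arguments.
Unset Strict Implicit.
Unset Printing Implicit Defensive.
Import GRing.Theory.
Local Open Scope ring_scope.

(* A finitely generated (= finite-dimensional) right A-module, realised on the
   row space 'rV[K]_n: v . a := v *m fact a. *)
Record fmod (K : fieldType) (A : falgType K) := FMod {
  fdim : nat;
  fact : A -> 'M[K]_fdim;
  fact_lin : forall (k : K) (a b : A), fact (k *: a + b) = k *: fact a + fact b;
  fact1 : fact 1 = 1%:M;
  factM : forall a b, fact (a * b) = fact a *m fact b }.

Section Modules.
Variables (K : fieldType) (A : falgType K).

(* module homomorphisms M -> N, acting on row vectors: v |-> v *m f *)
Definition is_hom (M N : fmod A) (f : 'M[K]_(fdim M, fdim N)) : Prop :=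
  forall a : A, fact M a *m f = f *m fact N a.

Definition ses (L M N : fmod A) (f : 'M[K]_(fdim L, fdim M))
  (g : 'M[K]_(fdim M, fdim N)) : Prop :=
  [/\ is_hom f, is_hom g, row_free f, row_full g & (f == kermx g)%MS].

(* torsion class: full subcategory (containing 0) closed under quotients
   (hence under isomorphism) and extensions *)
Definition torsion_class (T : fmod A -> Prop) : Prop :=
  [/\ (forall M : fmod A, fdim M = 0%N -> T M),
      (forall (M N : fmod A) (g : 'M[K]_(fdim M, fdim N)),
          is_hom g -> row_full g -> T M -> T N)
    & (forall (L M N : fmod A) f g, @ses L M N f g -> T L -> T N -> T M)].

Definition tsub (T U : fmod A -> Prop) : Prop := forall M, T M -> U M.
Definition teq (T U : fmod A -> Prop) : Prop := forall M, T M <-> U M.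

Fixpoint pin (X : Type) (x : X) (s : seq X) : Prop :=
  if s is y :: s' then y = x \/ pin x s' else False.

Definition tors_finite : Prop :=
  exists s : seq (fmod A -> Prop),
    forall T, torsion_class T -> exists2 U, pin U s & teq T U.

Definition tcover (V U : fmod A -> Prop) : Prop :=
  [/\ torsion_class V, torsion_class U, tsub V U, ~ tsub U V &
      forall W, torsion_class W -> tsub V W -> tsub W U -> teq W V \/ teq W U].

(* pop-down: meet (= intersection) of U and all its lower covers *)
Definition pop_down (U : fmod A -> Prop) : fmod A -> Prop :=
  fun M => U M /\ forall V, tcover V U -> V M.

(* pop-up: join (= smallest torsion class containing) U and all its upper covers *)
Definition pop_up (U : fmod A -> Prop) : fmod A -> Prop :=
  fun M => forall W, torsion_class W -> tsub U W ->
             (forall V, tcover U V -> tsub V W) -> W M.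

Definition in_image_pop_down (T : fmod A -> Prop) : Prop :=
  exists U, torsion_class U /\ teq (pop_down U) T.
Definition in_image_pop_up (T : fmod A -> Prop) : Prop :=
  exists U, torsion_class U /\ teq (pop_up U) T.

Definition projective_mod (P : fmod A) : Prop :=
  forall (M N : fmod A) (g : 'M[K]_(fdim M, fdim N)) (f : 'M[K]_(fdim P, fdim N)),
    is_hom g -> row_full g -> is_hom f ->
    exists h : 'M[K]_(fdim P, fdim M), is_hom h /\ h *m g = f.

Definition injective_mod (I : fmod A) : Prop :=
  forall (L M : fmod A) (f : 'M[K]_(fdim L, fdim M)) (g : 'M[K]_(fdim L, fdim I)),
    is_hom f -> row_free f -> is_hom g ->
    exists h : 'M[K]_(fdim M, fdim I), is_hom h /\ f *m h = g.

Definition perp (T : fmod A -> Prop) (M : fmod A) : Prop :=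
  forall (X : fmod A) (f : 'M[K]_(fdim X, fdim M)), T X -> is_hom f -> f = 0.

(* A is basic: no two orthogonal nonzero idempotents e, f with eA ~= fA
   (an iso eA -> fA is left multiplication by x in fAe with inverse y in eAf). *)
Definition basic_alg : Prop :=
  ~ exists e f x y : A,
      [/\ e * e = e, f * f = f, e * f = 0, f * e = 0 & e != 0] /\
      [/\ x = f * x * e, y = e * y * f, y * x = e & x * y = f].

End Modules.

From HB Require Import structures.
From mathcomp Require Import all_boot all_order all_algebra falgebra.
From mathcomp Require Import zify.
From Stdlib Require Import Classical.
Set Implicit Arguments.
Unset Strict Implicit.
Unset Printing Implicit Defensive.
Import GRing.Theory.
Local Open Scope ring_scope.

(* (1) Let P be projective in pop_down U.  Since P is projective, U ∩ P^⊥ is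
   a torsion class, and it misses P; as tors Λ is finite, there is a torsion
   class V maximal among those between U ∩ P^⊥ and U that miss P.  A torsion
   class W containing U ∩ P^⊥ and P contains U, by induction on dimension: a
   module M of U with a nonzero map h : P -> M is an extension of coker h,
   a smaller module of U, by im h, a quotient of P.  So V is a lower cover of
   U missing P, contradicting P ∈ pop_down U.
   (2) Dually, let I be injective with Hom(pop_up U, I) = 0, and take V
   minimal between U and ⊥(U^⊥ ∩ ⊥I) with Hom(V, I) ≠ 0.  Such V exist: a
   module S of minimal dimension with a nonzero map to I is simple, hence,
   I being injective, lies in ⊥(⊥I).  A torsion class W ⊇ U inside
   ⊥(U^⊥ ∩ ⊥I) with Hom(W, I) = 0 equals U, since a module of W outside U
   has a nonzero quotient in U^⊥, which then lies in U^⊥ ∩ ⊥I.  So V is an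
   upper cover of U, hence V ⊆ pop_up U, a contradiction. *)

Section MatrixFacts.
Variable K : fieldType.

Lemma mulmx_pinv_ker m n p (g : 'M[K]_(m, n)) (h : 'M[K]_(m, p)) :
  row_full g -> kermx g *m h = 0 -> g *m (pinvmx g *m h) = h.
Proof.
move=> gfull gh0.
have sub_ker : ((1%:M - g *m pinvmx g) <= kermx g)%MS.
  by apply/sub_kermxP; rewrite mulmxBl mul1mx -mulmxA mulVpmx // mulmx1 subrr.
have : (1%:M - g *m pinvmx g) *m h = 0.
  by rewrite -(mulmxKpV sub_ker) -[_ *m kermx g *m h]mulmxA gh0 mulmx0.
by rewrite mulmxBl mul1mx mulmxA => /eqP; rewrite subr_eq0 => /eqP.
Qed.

Lemma mx_rows0 m n (h : 'M[K]_(m, n)) : m = 0%N -> h = 0.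
Proof. by move=> m0; apply/eqP; rewrite -mxrank_eq0 -leqn0 -m0 rank_leq_row. Qed.

Lemma mx_cols0 m n (h : 'M[K]_(m, n)) : n = 0%N -> h = 0.
Proof. by move=> n0; apply/eqP; rewrite -mxrank_eq0 -leqn0 -n0 rank_leq_col. Qed.

Lemma mxrank_gt0 m n (h : 'M[K]_(m, n)) : h <> 0 -> (0 < \rank h)%N.
Proof. by move=> /eqP; rewrite lt0n mxrank_eq0. Qed.

Lemma row_full_mul m n p (a : 'M[K]_(m, n)) (b : 'M[K]_(n, p)) :
  row_full a -> row_full b -> row_full (a *m b).
Proof. by move=> afull; rewrite /row_full (eqmxMfull b afull). Qed.

Lemma mx1_neq0 n : (0 < n)%N -> (1%:M : 'M[K]_n) <> 0.
Proof.
by move=> n_gt0 /(congr1 mxrank); rewrite mxrank1 mxrank0 => n0; rewrite n0 in n_gt0.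
Qed.

End MatrixFacts.

Section SubQuotient.
Variables (K : fieldType) (A : falgType K).

Lemma is_hom1 (M : fmod A) : is_hom (1%:M : 'M[K]_(fdim M)).
Proof. by move=> a; rewrite mul1mx mulmx1. Qed.

Lemma is_homM (L M N : fmod A) (f : 'M[K]_(fdim L, fdim M))
    (g : 'M[K]_(fdim M, fdim N)) :
  is_hom f -> is_hom g -> is_hom (f *m g).
Proof. by move=> homf homg a; rewrite mulmxA homf -mulmxA homg mulmxA. Qed.

Section Submodule.
Variables (M : fmod A) (r : nat) (W : 'M[K]_(r, fdim M)).
Hypothesis Wfree : row_free W.
Hypothesis Wstable : forall a, (W *m fact M a <= W)%MS.

Definition subact a := W *m fact M a *m pinvmx W.

Lemma subact_lin (k : K) (a b : A) :
  subact (k *: a + b) = k *: subact a + subact b.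
Proof. by rewrite /subact fact_lin mulmxDr mulmxDl -!scalemxAr -scalemxAl. Qed.

Lemma subact1 : subact 1 = 1%:M.
Proof. by rewrite /subact fact1 mulmx1 mulmxVp. Qed.

Lemma subact_incl a : subact a *m W = W *m fact M a.
Proof. by rewrite mulmxKpV. Qed.

Lemma subactM a b : subact (a * b) = subact a *m subact b.
Proof. by rewrite /subact factM mulmxA -{1}(mulmxKpV (Wstable a)) !mulmxA. Qed.

Definition submod : fmod A := FMod subact_lin subact1 subactM.

Lemma submod_incl_hom : is_hom (W : 'M_(fdim submod, fdim M)).
Proof. exact: subact_incl. Qed.

End Submodule.

Section Quotient.
Variables (M : fmod A) (k : nat) (q : 'M[K]_(fdim M, k)).
Hypothesis qfull : row_full q.
Hypothesis ker_stable : forall a, kermx q *m (fact M a *m q) = 0.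

Definition quotact a := pinvmx q *m fact M a *m q.

Lemma quotact_proj a : q *m quotact a = fact M a *m q.
Proof. by rewrite /quotact -mulmxA mulmx_pinv_ker. Qed.

Lemma quotact_lin (c : K) (a b : A) :
  quotact (c *: a + b) = c *: quotact a + quotact b.
Proof. by rewrite /quotact fact_lin mulmxDr mulmxDl -!scalemxAr -scalemxAl. Qed.

Lemma quotact1 : quotact 1 = 1%:M.
Proof. by rewrite /quotact fact1 mulmx1 mulVpmx. Qed.

Lemma quotactM a b : quotact (a * b) = quotact a *m quotact b.
Proof.
by rewrite {1}/quotact factM mulmxA -[_ *m fact M b *m q]mulmxA -quotact_proj mulmxA.
Qed.

Definition quotmod : fmod A := FMod quotact_lin quotact1 quotactM.

Lemma quotmod_proj_hom : is_hom (q : 'M_(fdim M, fdim quotmod)).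
Proof. by move=> a; rewrite quotact_proj. Qed.

End Quotient.

Lemma hom_image_coker (X M : fmod A) (f : 'M[K]_(fdim X, fdim M)) : is_hom f ->
  exists (I C : fmod A) (p : 'M[K]_(fdim X, fdim I)) (j : 'M[K]_(fdim I, fdim M))
         (q : 'M[K]_(fdim M, fdim C)),
   [/\ is_hom p, row_full p, ses j q, fdim I = \rank f
     & fdim C = (fdim M - \rank f)%N].
Proof.
move=> homf.
have f_stable a : (f *m fact M a <= f)%MS by rewrite -homf submxMl.
have base_stable a : (row_base f *m fact M a <= row_base f)%MS.
  by rewrite eq_row_base (submx_trans _ (f_stable a)) // submxMr ?eq_row_base.
pose q := col_base (cokermx f).
have q_eq0 m (v : 'M[K]_(m, fdim M)) : (v *m q == 0) = (v <= f)%MS.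
  rewrite submxE; have -> : v *m cokermx f = v *m q *m row_base (cokermx f).
    by rewrite -mulmxA mulmx_base.
  by rewrite (mulmx_free_eq0 _ (row_base_free _)).
have ker_stable a : kermx q *m (fact M a *m q) = 0.
  apply/eqP; rewrite mulmxA q_eq0; apply: submx_trans (f_stable a).
  by rewrite submxMr // -q_eq0 mulmx_ker.
exists (submod (row_base_free f) base_stable).
exists (quotmod (col_base_full (cokermx f)) ker_stable).
exists (col_base f), (row_base f), q; split.
- move=> a; apply: (row_free_inj (row_base_free f)) => /=.
  rewrite -[LHS]mulmxA mulmx_base homf -[RHS]mulmxA (subact_incl base_stable).
  by rewrite [RHS]mulmxA mulmx_base.
- exact: col_base_full.
- split; [exact: submod_incl_hom | exact: quotmod_proj_hom | exact: row_base_free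
         | exact: col_base_full | ].
  apply/andP; split; first by rewrite sub_kermx q_eq0 eq_row_base.
  by rewrite eq_row_base -q_eq0 mulmx_ker.
- by [].
- by rewrite /= mxrank_coker.
Qed.

Lemma hom_kernel (S N : fmod A) (g : 'M[K]_(fdim S, fdim N)) : is_hom g ->
  exists (Kr : fmod A) (k : 'M[K]_(fdim Kr, fdim S)),
    [/\ is_hom k, row_free k, k *m g = 0 & fdim Kr = (fdim S - \rank g)%N].
Proof.
move=> homg.
have kg0 : row_base (kermx g) *m g = 0.
  by apply/sub_kermxP; rewrite eq_row_base.
have ker_stable a : (row_base (kermx g) *m fact S a <= row_base (kermx g))%MS.
  by rewrite eq_row_base; apply/sub_kermxP; rewrite -mulmxA homg mulmxA kg0 mul0mx.
exists (submod (row_base_free (kermx g)) ker_stable), (row_base (kermx g)).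
split=> //; first exact: submod_incl_hom; first exact: row_base_free.
by rewrite /= mxrank_ker.
Qed.

End SubQuotient.

Lemma fdim_ind (K : fieldType) (A : falgType K) (Pr : fmod A -> Prop) :
  (forall M, (forall N, (fdim N < fdim M)%N -> Pr N) -> Pr M) -> forall M, Pr M.
Proof.
move=> IH M; move: {2}(fdim M) (erefl (fdim M)) => n; elim/ltn_ind: n M.
by move=> n IHn M dM; apply: IH => N; rewrite dM => /IHn; apply.
Qed.

Section TorsionClasses.
Variables (K : fieldType) (A : falgType K).
Implicit Types (U V W : fmod A -> Prop) (M N P I S : fmod A).

Definition hom_eq0 M N : Prop :=
  forall h : 'M[K]_(fdim M, fdim N), is_hom h -> h = 0.

Definition lperp (F : fmod A -> Prop) M : Prop := forall N, F N -> hom_eq0 M N.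

Lemma not_hom_eq0 M N : ~ hom_eq0 M N ->
  exists2 h : 'M[K]_(fdim M, fdim N), is_hom h & h <> 0.
Proof.
move=> nhom0; apply: NNPP => nex; apply: nhom0 => h homh.
by apply: NNPP => h0; apply: nex; exists h.
Qed.

Lemma not_perp U M : ~ perp U M -> exists2 X, U X & ~ hom_eq0 X M.
Proof.
move=> nperp; apply: NNPP => nex; apply: nperp => X f UX.
have homX0 : hom_eq0 X M by apply: NNPP => nhom0; apply: nex; exists X.
exact: homX0.
Qed.

Lemma perpS U V N : tsub U V -> perp V N -> perp U N.
Proof. by move=> sUV perpV X f /sUV; apply: perpV. Qed.

Lemma ses_factor_sub P L M N f g (h : 'M[K]_(fdim P, fdim M)) :
  @ses K A L M N f g -> is_hom h -> h *m g = 0 ->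
  exists k : 'M[K]_(fdim P, fdim L), is_hom k /\ h = k *m f.
Proof.
case=> homf _ ffree _ /andP[_ ker_sub] homh hg0.
have hf : (h <= f)%MS by apply: submx_trans ker_sub; apply/sub_kermxP.
exists (h *m pinvmx f); split; last by rewrite mulmxKpV.
move=> a; apply: (row_free_inj ffree) => /=.
by rewrite -mulmxA mulmxKpV // -mulmxA homf mulmxA mulmxKpV // homh.
Qed.

Lemma ses_factor_quot L M N X f g (h : 'M[K]_(fdim M, fdim X)) :
  @ses K A L M N f g -> is_hom h -> f *m h = 0 ->
  exists k : 'M[K]_(fdim N, fdim X), is_hom k /\ h = g *m k.
Proof.
case=> _ homg _ gfull /andP[_ ker_sub] homh fh0.
have kerh0 : kermx g *m h = 0.
  by rewrite -(mulmxKpV ker_sub) -mulmxA fh0 mulmx0.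
have gk := mulmx_pinv_ker gfull kerh0.
exists (pinvmx g *m h); split=> //.
move=> a; apply: (row_full_inj gfull) => /=.
by rewrite mulmxA -homg -mulmxA gk homh [RHS]mulmxA gk.
Qed.

Lemma torsion_classI U V :
  torsion_class U -> torsion_class V -> torsion_class (fun M => U M /\ V M).
Proof.
case=> U0 Uq Ue [V0 Vq Ve]; split.
- by move=> M M0; split; [apply: U0 | apply: V0].
- move=> M N g homg gfull [UM VM].
  by split; [apply: Uq homg gfull UM | apply: Vq homg gfull VM].
- move=> L M N f g sfg [UL VL] [UN VN].
  by split; [apply: Ue sfg UL UN | apply: Ve sfg VL VN].
Qed.

Lemma projective_rperp_tc P : projective_mod P -> torsion_class (hom_eq0 P).
Proof.
move=> projP; split.
- by move=> M M0 h _; apply: mx_cols0.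
- move=> M N g homg gfull hom0 h homh.
  by have [h' [/hom0 -> <-]] := projP _ _ _ _ homg gfull homh; rewrite mul0mx.
- move=> L M N f g sfg homL homN h homh.
  have [_ homg _ _ _] := sfg.
  have [k [/homL -> ->]] := ses_factor_sub sfg homh (homN _ (is_homM homh homg)).
  by rewrite mul0mx.
Qed.

Lemma lperp_tc (F : fmod A -> Prop) : torsion_class (lperp F).
Proof.
split.
- by move=> M M0 N _ h _; apply: mx_rows0.
- move=> M X g homg gfull perpM N FN h homh.
  by apply: (row_full_inj gfull); rewrite (perpM N FN _ (is_homM homg homh)) mulmx0.
- move=> L M N' f g sfg perpL perpN N FN h homh.
  have [homf _ _ _ _] := sfg.
  have fh0 := perpL N FN _ (is_homM homf homh).
  by have [k [/(perpN N FN) -> ->]] := ses_factor_quot sfg homh fh0; rewrite mulmx0.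
Qed.

Lemma tsub_from_rperp U W P :
  torsion_class U -> torsion_class W -> W P ->
  tsub (fun M => U M /\ hom_eq0 P M) W -> tsub U W.
Proof.
case=> _ Uq _ [_ Wq We] WP sUW; elim/fdim_ind => M IH UM.
have [hom0|] := classic (hom_eq0 P M); first exact: sUW.
move=> /not_hom_eq0[h homh h0].
have [Im [C [p [j [q [homp pfull sjq dIm dC]]]]]] := hom_image_coker homh.
have [_ homq _ qfull _] := sjq.
apply: We sjq (Wq _ _ _ homp pfull WP) (IH _ _ (Uq _ _ _ homq qfull UM)).
by rewrite dC; have := mxrank_gt0 h0; have := rank_leq_col h; lia.
Qed.

Lemma rperp_quotient U M : torsion_class U -> ~ U M ->
  exists N (g : 'M[K]_(fdim M, fdim N)), [/\ is_hom g, row_full g, ~ U N & perp U N].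
Proof.
case=> _ Uq Ue; elim/fdim_ind: M => M IH notUM.
have [perpM|] := classic (perp U M).
  by exists M, 1%:M; rewrite /row_full mxrank1; split=> //; apply: is_hom1.
move=> /not_perp[X UX /not_hom_eq0[f homf f0]].
have [Im [C [p [j [q [homp pfull sjq dIm dC]]]]]] := hom_image_coker homf.
have [_ homq _ qfull _] := sjq.
have notUC : ~ U C.
  by move=> UC; apply/notUM/(Ue _ _ _ _ _ sjq _ UC)/(Uq _ _ _ homp pfull).
have [|N [g [homg gfull notUN perpN]]] := IH C _ notUC.
  by rewrite dC; have := mxrank_gt0 f0; have := rank_leq_col f; lia.
by exists N, (q *m g); split=> //; [apply: is_homM | apply: row_full_mul].
Qed.

Lemma tsub_from_lperp U W I :
  torsion_class U -> torsion_class W ->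
  tsub W (lperp (fun N => perp U N /\ hom_eq0 N I)) -> perp W I -> tsub W U.
Proof.
move=> tcU [_ Wq _] sWF perpWI M WM; apply: NNPP => notUM.
have [N [g [homg gfull notUN perpUN]]] := rperp_quotient tcU notUM.
have homNI : hom_eq0 N I by move=> h; apply: perpWI (Wq _ _ _ homg gfull WM).
have g0 := sWF M WM N (conj perpUN homNI) g homg.
apply: notUN; case: tcU => U0 _ _; apply: U0.
by move: gfull; rewrite /row_full g0 mxrank0 eq_sym => /eqP.
Qed.

End TorsionClasses.

Section MinimalMaps.
Variables (K : fieldType) (A : falgType K) (I : fmod A).

Definition hom_min S (i : 'M[K]_(fdim S, fdim I)) : Prop :=
  [/\ is_hom i, i <> 0 & forall S' (i' : 'M[K]_(fdim S', fdim I)),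
      (fdim S' < fdim S)%N -> is_hom i' -> i' = 0].

Lemma exists_hom_min : (0 < fdim I)%N -> exists S i, @hom_min S i.
Proof.
move=> dI; apply: NNPP => nmin.
suff hom0 : forall S, hom_eq0 S I by apply: (mx1_neq0 dI); apply: hom0 (is_hom1 I).
elim/fdim_ind => S IH; apply: NNPP => /not_hom_eq0[i homi i0].
by apply: nmin; exists S, i; split=> // S' i' /IH; apply.
Qed.

Section HomMin.
Variables (S : fmod A) (i : 'M[K]_(fdim S, fdim I)).
Hypothesis imin : hom_min i.

Lemma hom_min_row_free : row_free i.
Proof.
have [homi i0 min_i] := imin.
have [Im [C [p [j [q [_ _ [homj _ jfree _ _] dIm _]]]]]] := hom_image_coker homi.
apply: NNPP => /negP nfree.
have ltIm : (fdim Im < fdim S)%N by rewrite dIm ltn_neqAle rank_leq_row andbT.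
move: jfree; rewrite (min_i Im j ltIm homj) /row_free mxrank0 dIm eq_sym mxrank_eq0.
by move/eqP.
Qed.

Lemma hom_min_src_row_free N (g : 'M[K]_(fdim S, fdim N)) :
  is_hom g -> g <> 0 -> row_free g.
Proof.
move=> homg g0; have [homi _ min_i] := imin.
have [Kr [k [homk kfree _ dKr]]] := hom_kernel homg.
have ltKr : (fdim Kr < fdim S)%N.
  by rewrite dKr; have := mxrank_gt0 g0; have := rank_leq_row g; lia.
have k0 : k = 0.
  apply/eqP; rewrite -(mulmx_free_eq0 _ hom_min_row_free).
  by rewrite (min_i Kr _ ltKr (is_homM homk homi)).
move: kfree; rewrite k0 /row_free mxrank0 dKr eq_sym subn_eq0 => leSg.
by rewrite /row_free eqn_leq rank_leq_row.
Qed.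

Lemma hom_min_lperp : injective_mod I -> lperp (fun N => hom_eq0 N I) S.
Proof.
move=> injI N homNI g homg; apply: NNPP => g0; have [homi i0 _] := imin.
have [h [/homNI h0 gh]] := injI _ _ _ _ homg (hom_min_src_row_free homg g0) homi.
by apply: i0; rewrite -gh h0 mulmx0.
Qed.

End HomMin.

End MinimalMaps.

Section FiniteMax.
Variables (X : Type) (R : X -> X -> Prop).
Hypothesis R_refl : forall x, R x x.
Hypothesis R_trans : forall x y z, R x y -> R y z -> R x z.
Variable G : X -> Prop.

Lemma exists_max_above (s : seq X) x : G x ->
  (forall w, G w -> R x w -> exists2 y, pin y s & R w y /\ R y w) ->
  exists z, [/\ G z, R x z & forall w, G w -> R z w -> R w z].
Proof.
elim: s x => [|y s IH] x Gx reps; first by have [] := reps x Gx (R_refl x).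
(* Either the representative y can be dropped (after possibly moving x up), or
   an element equivalent to y lies above x and is maximal. *)
have [[w [Gw Rxw notRwy]]|all_below] := classic (exists w, [/\ G w, R x w & ~ R w y]).
  have [|z [Gz Rwz zmax]] := IH w Gw.
    move=> u Gu Rwu; have [y' [<-|sy'] eqv] := reps u Gu (R_trans Rxw Rwu).
      by case: notRwy; apply: R_trans Rwu eqv.1.
    by exists y'.
  by exists z; split=> //; apply: R_trans Rxw Rwz.
have below_y w : G w -> R x w -> R w y.
  by move=> Gw Rxw; apply: NNPP => notRwy; apply: all_below; exists w.
have [[w [Gw Rxw Ryw]]|none_above] := classic (exists w, [/\ G w, R x w & R y w]).
  exists w; split=> // u Gu Rwu.
  by apply: R_trans (below_y u Gu (R_trans Rxw Rwu)) Ryw.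
apply: IH Gx _ => w Gw Rxw; have [y' [<-|sy'] eqv] := reps w Gw Rxw.
  by case: none_above; exists w; split=> //; apply: eqv.2.
by exists y'.
Qed.

End FiniteMax.

Section Covers.
Variables (K : fieldType) (A : falgType K).
Implicit Types (U V W : fmod A -> Prop) (P I : fmod A).

Lemma tsub_trans U V W : tsub U V -> tsub V W -> tsub U W.
Proof. by move=> sUV sVW M /sUV /sVW. Qed.

Lemma tors_finite_max (G : (fmod A -> Prop) -> Prop) V0 :
  tors_finite A -> (forall V, G V -> torsion_class V) -> G V0 ->
  exists V, G V /\ forall W, G W -> tsub V W -> tsub W V.
Proof.
move=> [s reps] tcG GV0.
have [|V [GV _ Vmax]] := exists_max_above (fun U M => id) tsub_trans (s := s) GV0.
  by move=> W /tcG /reps[V sV eqWV] _; exists V => //; split=> M /eqWV.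
by exists V.
Qed.

Lemma tors_finite_min (G : (fmod A -> Prop) -> Prop) V0 :
  tors_finite A -> (forall V, G V -> torsion_class V) -> G V0 ->
  exists V, G V /\ forall W, G W -> tsub W V -> tsub V W.
Proof.
move=> [s reps] tcG GV0.
have [|V [GV _ Vmin]] :=
  exists_max_above (R := fun V W => tsub W V) (fun U M => id)
    (fun U V W sVU sWV => tsub_trans sWV sVU) (s := s) GV0.
  by move=> W /tcG /reps[V sV eqWV] _; exists V => //; split=> M /eqWV.
by exists V.
Qed.

Lemma proj_lower_cover U P :
  tors_finite A -> torsion_class U -> projective_mod P -> (0 < fdim P)%N -> U P ->
  exists V, tcover V U /\ ~ V P.
Proof.
move=> fin tcU projP dP UP.
pose V0 M := U M /\ hom_eq0 P M.
pose G V := [/\ torsion_class V, tsub V0 V, tsub V U & ~ V P].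
have GV0 : G V0.
  split=> //; first exact: torsion_classI tcU (projective_rperp_tc projP).
    by move=> M [].
  by move=> [_ /(_ _ (is_hom1 P))]; apply: mx1_neq0.
have [V [[tcV sV0V sVU notVP] Vmax]] :=
  tors_finite_max (G := G) fin (fun V => fun '(And4 tcV _ _ _) => tcV) GV0.
exists V; split=> //; split=> //; first by move/(_ P UP).
move=> W tcW sVW sWU; have [WP|notWP] := classic (W P).
  right=> M; split; first exact: sWU.
  exact: tsub_from_rperp tcU tcW WP (tsub_trans sV0V sVW) M.
left=> M; split; last exact: sVW.
by apply: (Vmax W _ sVW M); split=> //; apply: tsub_trans sV0V sVW.
Qed.

Lemma pop_down_projective U P :
  tors_finite A -> torsion_class U -> projective_mod P -> (0 < fdim P)%N ->
  ~ pop_down U P.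
Proof.
move=> fin tcU projP dP [UP covers_contain].
have [V [covV notVP]] := proj_lower_cover fin tcU projP dP UP.
exact: notVP (covers_contain V covV).
Qed.

Lemma inj_upper_cover U I :
  tors_finite A -> torsion_class U -> injective_mod I -> (0 < fdim I)%N -> perp U I ->
  exists V, tcover U V /\ ~ perp V I.
Proof.
move=> fin tcU injI dI perpUI.
pose V1 := lperp (fun N => perp U N /\ hom_eq0 N I).
pose G V := [/\ torsion_class V, tsub U V, tsub V V1 & ~ perp V I].
have GV1 : G V1.
  split; first exact: lperp_tc.
  - by move=> M UM N [perpUN _] h; apply: perpUN UM.
  - by [].
  have [S [i imin]] := exists_hom_min dI; have [homi i0 _] := imin.
  move=> perpV1; apply/i0/(perpV1 S) => // N [_ homNI].
  exact: hom_min_lperp imin injI N homNI.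
have [V [[tcV sUV sVV1 nperpV] Vmin]] :=
  tors_finite_min (G := G) fin (fun V => fun '(And4 tcV _ _ _) => tcV) GV1.
exists V; split=> //; split=> //; first by move=> sVU; apply/nperpV/(perpS sVU).
move=> W tcW sUW sWV; have [perpWI|nperpWI] := classic (perp W I).
  left=> M; split; last exact: sUW.
  exact: tsub_from_lperp tcU tcW (tsub_trans sWV sVV1) perpWI M.
right=> M; split; first exact: sWV.
by apply: (Vmin W _ sWV M); split=> //; apply: tsub_trans sWV sVV1.
Qed.

Lemma sub_pop_up U : tsub U (pop_up U).
Proof. by move=> M UM W _ sUW _; apply: sUW. Qed.

Lemma tcover_sub_pop_up U V : tcover U V -> tsub V (pop_up U).
Proof. by move=> covV M VM W _ _ sW; apply: sW covV M VM. Qed.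

Lemma pop_up_injective U I :
  tors_finite A -> torsion_class U -> injective_mod I -> (0 < fdim I)%N ->
  ~ perp (pop_up U) I.
Proof.
move=> fin tcU injI dI perpI.
have [V [covV nperpV]] := inj_upper_cover fin tcU injI dI (perpS (@sub_pop_up U) perpI).
exact/nperpV/(perpS (tcover_sub_pop_up covV)).
Qed.

End Covers.

Theorem lemma5p8 (K : fieldType) (A : falgType K) (T : fmod A -> Prop) :
  basic_alg A -> tors_finite A -> torsion_class T ->
  ((exists P : fmod A, (0 < fdim P)%N /\ projective_mod P /\ T P) ->
      ~ in_image_pop_down T) /\
  ((exists I : fmod A, (0 < fdim I)%N /\ injective_mod I /\ perp T I) ->
      ~ in_image_pop_up T).
Proof.
move=> _ fin _; split.
  move=> [P [dP [projP TP]]] [U [tcU popUT]].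
  exact: pop_down_projective fin tcU projP dP ((popUT P).2 TP).
move=> [I [dI [injI perpTI]]] [U [tcU popUT]].
by apply: pop_up_injective fin tcU injI dI (perpS _ perpTI) => M /popUT.
Qed.
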